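(* Let $q=2$, and assume $A\cap B=\emptyset$, $|C|=m-1$ and $|A|\ge2$. Then the dual code $\mathcal C_{\overline{\mathcal N}_4}^\perp$ is a binary distance-optimal linear code with parameters $\left[2^{m+|A|+|B|}-2^{m+|B|},\ 2^{m+|A|+|B|}-2^{m+|B|}-m-2|A|-|B|,\ 4\right]$.
   Context: $\mathbb F_2$ is the binary field, $m\ge2$, $[m]=\{1,\dots,m\}$, $\mathrm{supp}(v)=\{i:v_i\ne0\}$. For nonempty $P\subseteq[m]$, $\Delta_P=\{v\in\mathbb F_2^m:\mathrm{supp}(v)\subseteq P\}$, $\Delta_P^c=\mathbb F_2^m\setminus\Delta_P$, $\Delta_P^*=\Delta_P\setminus\{\mathbf 0\}$. $A,B,C$ are nonempty subsets of $[m]$. Let $\mathcal N_4=\{(w_2+\omega,w_3,w_1)\in\mathbb F_2^{3m}: w_1\in\Delta_A^*,\ w_2\in\Delta_B,\ w_3\in\Delta_C^c,\ \omega\in\{\mathbf 0,w_1\}\}$, set $\overline{\mathcal N}_4=\mathcal N_4$ (over $\mathbb F_2$ each scalar class is a singleton), and let $\mathcal C_{\overline{\mathcal N}_4}$ be the binary linear code spanned by the rows of the $3m\times|\overline{\mathcal N}_4|$ matrix whose columns are the elements of $\overline{\mathcal N}_4$. $\mathcal C^\perp$ is the Euclidean dual. An $[n,k,d]$ code is distance-optimal if no linear $[n,k,d+1]$ code over the same field exists. *)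

(* Binary linear codes as row spaces of matrices over 'F_2. *)
From HB Require Import structures.
From mathcomp Require Import all_boot all_order all_algebra.
Set Implicit Arguments. Unset Strict Implicit. Unset Printing Implicit Defensive.
Import GRing.Theory.
Local Open Scope ring_scope.

Notation vec m := 'rV['F_2]_m.

Definition supp (m : nat) (v : vec m) : {set 'I_m} := [set i | v 0 i != 0].

Definition inDelta (m : nat) (P : {set 'I_m}) (v : vec m) : bool := supp v \subset P.

Definition N4 (m : nat) (A B C : {set 'I_m}) : {set vec (m + m + m)} :=
  [set x | [exists w1 : vec m, exists w2 : vec m, exists w3 : vec m, exists om : vec m,
     [&& inDelta A w1, w1 != 0, inDelta B w2, ~~ inDelta C w3,
         (om == 0) || (om == w1) &
         x == row_mx (row_mx (w2 + om) w3) w1]]].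

Definition genN4 (m : nat) (A B C : {set 'I_m}) : 'M['F_2]_(m + m + m, #|N4 A B C|) :=
  \matrix_(i, j) (@enum_val _ (mem (N4 A B C)) j) 0 i.

Definition dual_code (r n : nat) (G : 'M['F_2]_(r, n)) : 'M['F_2]_n := kermx G^T.

Definition wt (n : nat) (c : 'rV['F_2]_n) : nat := #|supp c|.

Definition min_dist (r n : nat) (M : 'M['F_2]_(r, n)) (d : nat) : Prop :=
  (exists2 c : 'rV['F_2]_n, (c <= M)%MS & (c != 0) && (wt c == d)) /\
  (forall c : 'rV['F_2]_n, (c <= M)%MS -> c != 0 -> (d <= wt c)%N).

Definition is_code_nkd (r n : nat) (M : 'M['F_2]_(r, n)) (k d : nat) : Prop :=
  \rank M = k /\ min_dist M d.

Definition no_better_code (n k d : nat) : Prop :=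
  ~ exists (r : nat) (M : 'M['F_2]_(r, n)), is_code_nkd M k d.+1.

Definition distance_optimal (r n : nat) (M : 'M['F_2]_(r, n)) (k d : nat) : Prop :=
  is_code_nkd M k d /\ no_better_code n k d.

(* Write a column of the generator matrix as (y1, y2, y3): y3 is in Delta_A^*,
   y2 is outside Delta_C, and y1 or y1 + y3 is in Delta_B.  Since |C| = m - 1, a
   single coordinate j0 lies outside C, and every column has a 1 at j0 in its
   middle block; so all dual codewords have even weight, and as the columns are
   distinct the dual distance is at least 4.  It is exactly 4 because the columns
   (y, e_j0, e_a) with y in {0, e_a, e_b, e_a + e_b} (a in A, b in B) sum to zero.
   The columns span Delta_(A u B) x F_2^m x Delta_A, which gives the dimension.
   A code of length n = 2h and minimum distance 5 has at least h^2 cosets, one for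
   each word e_i + e_(h + j); with the given length and dimension there are only
   2^(m + 2|A| + |B|) < h^2 of them, so distance 4 is optimal. *)

From HB Require Import structures.
From mathcomp Require Import all_boot all_order all_algebra.
From mathcomp Require Import zify ring.
Set Implicit Arguments. Unset Strict Implicit. Unset Printing Implicit Defensive.
Import GRing.Theory.
Local Open Scope ring_scope.

Lemma pchar_F2 : (2 \in [pchar 'F_2])%N.
Proof. exact: pchar_Fp. Qed.

Lemma F2_neq0 (x : 'F_2) : (x != 0) = (x == 1).
Proof. by case: x => [[|[|k]] //]. Qed.

Lemma F2_nat_neq0 (x : 'F_2) : (x != 0)%:R = x.
Proof. by apply: val_inj; case: x => [[|[|k]] //]. Qed.

Lemma natr_F2 (n : nat) : (n%:R : 'F_2) = (odd n)%:R.
Proof. by rewrite -(Fp_nat_mod (isT : prime 2)) modn2. Qed.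

Lemma addmx_xx (p n : nat) (v : 'M['F_2]_(p, n)) : v + v = 0.
Proof. by apply/matrixP => i j; rewrite !mxE (addrr_pchar2 pchar_F2). Qed.

Lemma oppmx_F2 (p n : nat) (v : 'M['F_2]_(p, n)) : - v = v.
Proof. by apply/eqP; rewrite eq_sym -addr_eq0 addmx_xx. Qed.

Lemma addmxKF2 (p n : nat) (u v : 'M['F_2]_(p, n)) : u + v + v = u.
Proof. by rewrite -addrA addmx_xx addr0. Qed.

Lemma delta_neq0 (n : nat) (t : 'I_n) : ('e_t : vec n) != 0.
Proof. by apply/eqP => /rowP/(_ t); rewrite !mxE !eqxx; apply/eqP. Qed.

Lemma sum_deltaE (n : nat) (s : seq 'I_n) k :
  (\sum_(j <- s) 'e_j : vec n) 0 k = (count_mem k s)%:R.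
Proof.
rewrite summxE -sum1_count natr_sum [RHS]big_mkcond /=.
by apply: eq_bigr => j _; rewrite mxE eqxx eq_sym; case: (j == k).
Qed.

Lemma supp_sum_delta_sub (n : nat) (s : seq 'I_n) :
  supp (\sum_(j <- s) 'e_j) \subset [set j in s].
Proof.
apply/subsetP => k; rewrite !inE sum_deltaE -has_pred1 has_count.
by case: count => [|c] //; rewrite mulr0n eqxx.
Qed.

Lemma supp_sum_delta (n : nat) (s : seq 'I_n) :
  uniq s -> supp (\sum_(j <- s) 'e_j) = [set j in s].
Proof.
by move=> us; apply/setP => k; rewrite !inE sum_deltaE count_uniq_mem //; case: (k \in s).
Qed.

Lemma wt_sum_delta (n : nat) (s : seq 'I_n) : uniq s -> wt (\sum_(j <- s) 'e_j) = size s.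
Proof. by move=> us; rewrite /wt supp_sum_delta // cardsE; apply/card_uniqP. Qed.

Lemma wt_sum_delta_le (n : nat) (s : seq 'I_n) : (wt (\sum_(j <- s) 'e_j) <= size s)%N.
Proof.
apply: leq_trans (subset_leq_card (supp_sum_delta_sub s)) _.
by rewrite cardsE card_size.
Qed.

Lemma supp_inj (n : nat) : injective (@supp n).
Proof.
move=> u v /setP uv; apply/rowP => k.
by rewrite -[u 0 k]F2_nat_neq0 -[v 0 k]F2_nat_neq0; have := uv k; rewrite !inE => ->.
Qed.

Lemma wt_eq0 (n : nat) (c : 'rV['F_2]_n) : (wt c == 0)%N = (c == 0).
Proof.
rewrite cards_eq0; apply/eqP/eqP => [c0|->]; last by apply/setP => k; rewrite !inE mxE eqxx.
by apply: supp_inj; rewrite c0; apply/setP => k; rewrite !inE mxE eqxx.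
Qed.

Lemma sum_row_F2 (n : nat) (c : 'rV['F_2]_n) : \sum_i c 0 i = (wt c)%:R.
Proof.
rewrite (bigID (fun i => c 0 i != 0)) /= [X in _ + X]big1 => [|i]; last by rewrite negbK => /eqP.
rewrite addr0 (eq_bigr (fun=> 1)) => [|i]; last by move=> ci; rewrite -[c 0 i]F2_nat_neq0 ci.
by rewrite sumr_const; congr (_ *+ _); apply: eq_card => i; rewrite inE.
Qed.

Lemma mul_sum_delta (n r : nat) (s : seq 'I_n) (H : 'M['F_2]_(n, r)) :
  (\sum_(j <- s) 'e_j) *m H = \sum_(j <- s) row j H.
Proof. by rewrite mulmx_suml; apply: eq_bigr => j _; rewrite rowE. Qed.

Lemma card_rowspace (r n : nat) (X : 'M['F_2]_(r, n)) :
  #|[set v : 'rV_n | (v <= X)%MS]| = (2 ^ \rank X)%N.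
Proof.
have -> : [set v : 'rV_n | (v <= X)%MS] = [set u *m row_base X | u in 'rV_(\rank X)].
  apply/setP => v; rewrite inE; apply/idP/imsetP => [vX|[u _ ->]].
    have /submxP[u ->] : (v <= row_base X)%MS by rewrite eq_row_base.
    by exists u.
  by have := submxMl u (row_base X); rewrite eq_row_base.
rewrite card_imset; last exact: row_free_inj (row_base_free X).
by rewrite card_mx card_Fp // mul1n.
Qed.

Lemma kermx_sum_delta (n r : nat) (H : 'M['F_2]_(n, r)) (s : seq 'I_n) :
  uniq s -> (0 < size s)%N -> \sum_(j <- s) row j H = 0 ->
  exists2 c : 'rV_n, (c <= kermx H)%MS & (c != 0) && (wt c == size s).
Proof.
move=> us s_gt0 sH0; exists (\sum_(j <- s) 'e_j); first by apply/sub_kermxP; rewrite mul_sum_delta.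
by rewrite -wt_eq0 wt_sum_delta // -lt0n s_gt0 eqxx.
Qed.

Lemma kermx_wt_ge4 (n r : nat) (H : 'M['F_2]_(n, r)) (i0 : 'I_r) (c : 'rV_n) :
  injective (fun j => row j H) -> (forall j, H j i0 = 1) ->
  (c <= kermx H)%MS -> c != 0 -> (4 <= wt c)%N.
Proof.
move=> Hinj Hi0 /sub_kermxP cH c0.
have wt_even : ~~ odd (wt c).
  have := congr1 (fun v : 'rV_r => v 0 i0) cH; rewrite !mxE.
  under eq_bigr do rewrite Hi0 mulr1.
  by rewrite sum_row_F2 natr_F2; case: odd => // /eqP; rewrite oner_eq0.
have wt_neq0 : wt c != 0%N by rewrite wt_eq0.
have wt_neq2 : wt c != 2%N.
  apply/negP => /cards2P[i [j [ij suppc]]].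
  have cE : c = \sum_(k <- [:: i; j]) 'e_k.
    by apply: supp_inj; rewrite supp_sum_delta /= ?inE ?ij // suppc; apply/setP => k; rewrite !inE.
  move: cH; rewrite cE mul_sum_delta !big_cons big_nil addr0 => /eqP.
  by rewrite addr_eq0 oppmx_F2 => /eqP/Hinj/eqP; rewrite (negbTE ij).
by move: wt_even wt_neq0 wt_neq2; case: (wt c) => [|[|[|[|]]]].
Qed.

Lemma wt5_packing_bound (r n h : nat) (M : 'M['F_2]_(r, n)) :
  (h + h <= n)%N -> (forall c : 'rV_n, (c <= M)%MS -> c != 0 -> (5 <= wt c)%N) ->
  (h * h <= 2 ^ (n - \rank M))%N.
Proof.
move=> hh M5.
pose lo (i : 'I_h) : 'I_n := widen_ord hh (lshift h i).
pose hi (j : 'I_h) : 'I_n := widen_ord hh (rshift h j).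
have lo_hi i j : (lo i == hi j) = false.
  by apply/negbTE; rewrite -val_eqE /= neq_ltn (leq_trans (ltn_ord i)) ?leq_addr.
have lo_inj : injective lo by move=> i i' /(congr1 val) ii'; apply: val_inj.
have hi_inj : injective hi by move=> j j' /(congr1 val) /addnI jj'; apply: val_inj.
pose g (p : 'I_h * 'I_h) : 'rV['F_2]_n := \sum_(k <- [:: lo p.1; hi p.2]) 'e_k.
have g_inj : injective g.
  move=> [i j] [i' j'] /(congr1 (@supp n)); rewrite !supp_sum_delta /= ?inE ?lo_hi //.
  move=> /setP eq_supp; have := eq_supp (lo i); have := eq_supp (hi j).
  rewrite !inE !eqxx !(inj_eq lo_inj) !(inj_eq hi_inj) ![hi j == lo _]eq_sym !lo_hi !orbF.
  by move=> /esym/eqP-> /esym/eqP->.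
pose F p := g p *m cokermx M.
have F_inj : injective F.
  move=> p q /eqP; rewrite -subr_eq0 -mulmxBl -submxE oppmx_F2 => gpq_M.
  apply: g_inj; apply/eqP; rewrite -subr_eq0 oppmx_F2; apply: contraTT gpq_M => gpq0.
  apply/negP => /M5 /(_ gpq0); rewrite ltnNge => /negP; apply.
  by rewrite -big_cat (leq_trans (wt_sum_delta_le _)).
have : (#|[set F p | p in {: 'I_h * 'I_h}]| <= #|[set w : 'rV_n | (w <= cokermx M)%MS]|)%N.
  by apply/subset_leq_card/subsetP => _ /imsetP[p _ ->]; rewrite inE submxMl.
by rewrite card_imset // card_prod card_ord card_rowspace mxrank_coker.
Qed.

Lemma sqr_pred_mul_gt (x w : nat) :
  (4 <= x)%N -> (4 <= w)%N -> (2 * w * (x * x) < (x - 1) * w * ((x - 1) * w))%N.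
Proof.
case: x => // y; rewrite subSS subn0 ltnS => y3 w4.
have sq_y : (y.+1 * y.+1 < 2 * (y * y))%N by nia.
have : (2 * w * (y.+1 * y.+1) < 4 * w * (y * y))%N by nia.
nia.
Qed.

Lemma no_wt5_code (r n s x w : nat) (M : 'M['F_2]_(r, n)) :
  n = ((x - 1) * w * 2)%N -> (n - \rank M <= s)%N -> (2 ^ s = 2 * w * (x * x))%N ->
  (4 <= x)%N -> (4 <= w)%N ->
  ~ (forall c : 'rV_n, (c <= M)%MS -> c != 0 -> (5 <= wt c)%N).
Proof.
move=> n_xw corank pow_s x4 w4 M5.
have hh : ((x - 1) * w + (x - 1) * w <= n)%N by rewrite n_xw muln2 addnn.
have := leq_trans (wt5_packing_bound hh M5) (leq_pexp2l (isT : (0 < 2)%N) corank).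
by rewrite pow_s leqNgt sqr_pred_mul_gt.
Qed.

Lemma inDeltaP (m : nat) (S : {set 'I_m}) (v : vec m) :
  reflect (forall i, i \notin S -> v 0 i = 0) (inDelta S v).
Proof.
apply: (iffP subsetP) => [vS i|vS i]; rewrite ?inE.
  by apply: contraNeq => vi; apply: vS; rewrite inE.
by apply: contraR => /vS ->.
Qed.

Definition sel_mx (m : nat) (S : {set 'I_m}) : 'M['F_2]_(#|S|, m) :=
  \matrix_(k, j) (enum_val k == j)%:R.

Lemma row_sel_mx (m : nat) (S : {set 'I_m}) k : row k (sel_mx S) = 'e_(enum_val k).
Proof. by apply/rowP => j; rewrite !mxE eqxx eq_sym. Qed.

Lemma sel_mx_free (m : nat) (S : {set 'I_m}) : row_free (sel_mx S).
Proof.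
apply/row_freeP; exists (sel_mx S)^T; apply/matrixP => i k; rewrite !mxE.
rewrite (bigD1 (enum_val i)) //= big1 => [|j ji]; last by rewrite !mxE eq_sym (negbTE ji) mul0r.
by rewrite !mxE eqxx mul1r addr0 (inj_eq enum_val_inj) eq_sym.
Qed.

Lemma sel_mx_sub (m : nat) (S : {set 'I_m}) (v : vec m) :
  (v <= sel_mx S)%MS = inDelta S v.
Proof.
apply/idP/inDeltaP => [/submxP[u ->] i iS|vS].
  rewrite mxE big1 // => k _; rewrite mxE.
  by case: eqP => [ki|]; [move: iS; rewrite -ki enum_valP | rewrite mulr0].
rewrite [v]row_sum_delta summx_sub // => i _.
have [iS|/vS->] := boolP (i \in S); last by rewrite scale0r sub0mx.
by rewrite scalemx_sub // -(enum_rankK_in iS iS) -row_sel_mx row_sub.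
Qed.

Lemma card_Delta (m : nat) (S : {set 'I_m}) :
  #|[set v : vec m | inDelta S v]| = (2 ^ #|S|)%N.
Proof.
have /eqP <- := sel_mx_free S; rewrite -card_rowspace.
by apply: eq_card => v; rewrite !inE sel_mx_sub.
Qed.

Lemma inDelta0 (m : nat) (S : {set 'I_m}) : inDelta S (0 : vec m).
Proof. by apply/inDeltaP => i _; rewrite mxE. Qed.

Lemma inDeltaD (m : nat) (S : {set 'I_m}) (u v : vec m) :
  inDelta S u -> inDelta S v -> inDelta S (u + v).
Proof. by move=> /inDeltaP uS /inDeltaP vS; apply/inDeltaP => i iS; rewrite mxE uS ?vS ?addr0. Qed.

Lemma inDeltaS (m : nat) (S T : {set 'I_m}) (v : vec m) :
  S \subset T -> inDelta S v -> inDelta T v.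
Proof. by move=> ST vS; apply: subset_trans ST. Qed.

Lemma inDelta_delta (m : nat) (S : {set 'I_m}) t : t \in S -> inDelta S ('e_t : vec m).
Proof.
by move=> tS; apply/inDeltaP => i; rewrite mxE; case: (i =P t) => [->|]; rewrite ?tS ?andbF.
Qed.

Lemma inDelta_disjoint (m : nat) (S T : {set 'I_m}) (v : vec m) :
  S :&: T = set0 -> inDelta S v -> inDelta T v -> v = 0.
Proof.
move=> ST /inDeltaP vS /inDeltaP vT; apply/rowP => i; rewrite mxE.
have [iS|/vS//] := boolP (i \in S); apply: vT; apply: contra_eqN ST => iT.
by apply/set0Pn; exists i; rewrite inE iS.
Qed.

Lemma notDelta_compl1 (m : nat) (C : {set 'I_m}) j0 (v : vec m) :
  ~: C = [set j0] -> (~~ inDelta C v) = (v 0 j0 == 1).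
Proof.
move=> Cj0; have notC i : (i \notin C) = (i == j0) by rewrite -in_setC Cj0 inE.
rewrite -F2_neq0; apply/idP/idP => [vC|vj].
  by apply: contra vC => /eqP vj; apply/inDeltaP => i; rewrite notC => /eqP ->.
by apply: contra vj => /inDeltaP/(_ j0); rewrite notC eqxx => /(_ isT) ->.
Qed.

Lemma card_notDelta (m : nat) (S : {set 'I_m}) :
  #|[set v : vec m | ~~ inDelta S v]| = (2 ^ m - 2 ^ #|S|)%N.
Proof.
have card_vec : #|{: vec m}| = (2 ^ m)%N by rewrite card_mx card_Fp // mul1n.
rewrite -card_Delta -card_vec cardsCs.
by congr (_ - #|pred_of_set _|)%N; apply/setP => v; rewrite !inE negbK.
Qed.

Lemma card_Delta_neq0 (m : nat) (S : {set 'I_m}) :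
  #|[set v : vec m | inDelta S v & v != 0]| = (2 ^ #|S| - 1)%N.
Proof.
rewrite -card_Delta [in RHS](cardsD1 0) inE inDelta0 add1n subn1 /=.
by apply: eq_card => v; rewrite !inE andbC.
Qed.

Lemma card_Delta_coset2 (m : nat) (S : {set 'I_m}) (y : vec m) :
  ~~ inDelta S y -> #|[set x : vec m | inDelta S x || inDelta S (x + y)]| = (2 * 2 ^ #|S|)%N.
Proof.
move=> Sy; set D := [set x : vec m | inDelta S x].
have -> : [set x | inDelta S x || inDelta S (x + y)] = D :|: (+%R^~ y) @^-1: D.
  by apply/setP => x; rewrite !inE.
rewrite cardsU card_preimset; last exact: addIr.
have -> : D :&: (+%R^~ y) @^-1: D = set0.
  apply/setP => x; rewrite !inE; apply/negP => /andP[Sx Sxy]; move/negP: Sy; apply.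
  by have := inDeltaD Sxy Sx; rewrite addrAC addmx_xx add0r.
by rewrite cards0 subn0 addnn -mul2n card_Delta.
Qed.

Definition row3 (m : nat) (y1 y2 y3 : vec m) : vec (m + m + m) := row_mx (row_mx y1 y2) y3.

Lemma row3K (m : nat) (x : vec (m + m + m)) :
  row3 (lsubmx (lsubmx x)) (rsubmx (lsubmx x)) (rsubmx x) = x.
Proof. by rewrite /row3 !hsubmxK. Qed.

Lemma row3_inj (m : nat) (a1 a2 a3 b1 b2 b3 : vec m) :
  row3 a1 a2 a3 = row3 b1 b2 b3 -> [/\ a1 = b1, a2 = b2 & a3 = b3].
Proof. by case/eq_row_mx => /eq_row_mx [-> ->] ->. Qed.

Lemma add_row3 (m : nat) (a1 a2 a3 b1 b2 b3 : vec m) :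
  row3 a1 a2 a3 + row3 b1 b2 b3 = row3 (a1 + b1) (a2 + b2) (a3 + b3).
Proof. by rewrite /row3 !add_row_mx. Qed.

Definition diag3_mx (p1 p2 p3 n1 n2 n3 : nat) (M1 : 'M['F_2]_(p1, n1))
    (M2 : 'M['F_2]_(p2, n2)) (M3 : 'M['F_2]_(p3, n3)) : 'M_(p1 + p2 + p3, n1 + n2 + n3) :=
  col_mx (col_mx (row_mx (row_mx M1 0) 0) (row_mx (row_mx 0 M2) 0)) (row_mx (row_mx 0 0) M3).

Section Diag3.
Variables (p1 p2 p3 n1 n2 n3 : nat).
Variables (M1 : 'M['F_2]_(p1, n1)) (M2 : 'M['F_2]_(p2, n2)) (M3 : 'M['F_2]_(p3, n3)).

Lemma mul_diag3_mx (u1 : 'rV_p1) (u2 : 'rV_p2) (u3 : 'rV_p3) :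
  row_mx (row_mx u1 u2) u3 *m diag3_mx M1 M2 M3 =
  row_mx (row_mx (u1 *m M1) (u2 *m M2)) (u3 *m M3).
Proof. by rewrite !mul_row_col !mul_mx_row !mulmx0 !add_row_mx !addr0 !add0r. Qed.

Lemma diag3_mx_free :
  row_free M1 -> row_free M2 -> row_free M3 -> row_free (diag3_mx M1 M2 M3).
Proof.
move=> /row_free_inj M1i /row_free_inj M2i /row_free_inj M3i.
rewrite -kermx_eq0; apply/eqP/row_matrixP => i; rewrite row0.
have := mulmx_ker (diag3_mx M1 M2 M3); move/(congr1 (row i)); rewrite row_mul row0.
rewrite -[row i _]hsubmxK -[lsubmx _]hsubmxK mul_diag3_mx => /eqP.
rewrite !row_mx_eq0 -(mul0mx _ M1) -(mul0mx _ M2) -(mul0mx _ M3).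
by case/andP=> /andP[/eqP/M1i-> /eqP/M2i->] /eqP/M3i->; rewrite !row_mx0.
Qed.

Lemma row3_sub_diag3_mx (y1 : 'rV_n1) (y2 : 'rV_n2) (y3 : 'rV_n3) :
  (y1 <= M1)%MS -> (y2 <= M2)%MS -> (y3 <= M3)%MS ->
  (row_mx (row_mx y1 y2) y3 <= diag3_mx M1 M2 M3)%MS.
Proof.
move=> /submxP[u1 ->] /submxP[u2 ->] /submxP[u3 ->].
by rewrite -mul_diag3_mx submxMl.
Qed.

Lemma diag3_mx_sub (q : nat) (X : 'M_(q, n1 + n2 + n3)) :
  (forall k, (row_mx (row_mx (row k M1) 0) 0 <= X)%MS) ->
  (forall k, (row_mx (row_mx 0 (row k M2)) 0 <= X)%MS) ->
  (forall k, (row_mx (row_mx 0 0) (row k M3) <= X)%MS) ->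
  (diag3_mx M1 M2 M3 <= X)%MS.
Proof.
move=> X1 X2 X3; rewrite !col_mx_sub -andbA.
by apply/and3P; split; apply/row_subP => k; rewrite !row_row_mx !row0.
Qed.

End Diag3.

Lemma N4P (m : nat) (A B C : {set 'I_m}) (y1 y2 y3 : vec m) :
  (row3 y1 y2 y3 \in N4 A B C) =
  [&& inDelta A y3, y3 != 0, ~~ inDelta C y2 & inDelta B y1 || inDelta B (y1 + y3)].
Proof.
rewrite inE; apply/existsP/idP => [[w1 /existsP[w2 /existsP[w3 /existsP[om]]]]|].
  case/and5P=> Aw1 w1n0 Bw2 Cw3 /andP[om_w1 /eqP/row3_inj[-> -> ->]].
  by rewrite Aw1 w1n0 Cw3; case/orP: om_w1 => /eqP->; rewrite ?addr0 ?addmxKF2 Bw2 ?orbT.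
case/and4P=> Ay3 y3n0 Cy2 /orP[By1|By13].
  exists y3; apply/existsP; exists y1; apply/existsP; exists y2; apply/existsP; exists 0.
  by rewrite Ay3 y3n0 By1 Cy2 addr0 !eqxx.
exists y3; apply/existsP; exists (y1 + y3); apply/existsP; exists y2; apply/existsP; exists y3.
by rewrite Ay3 y3n0 By13 Cy2 addmxKF2 !eqxx orbT.
Qed.

Lemma card_N4_sum (m : nat) (A B C : {set 'I_m}) :
  #|N4 A B C| =
  (\sum_(y3 : vec m) \sum_(y2 : vec m) #|[set y1 : vec m | row3 y1 y2 y3 \in N4 A B C]|)%N.
Proof.
pose f (t : vec m * (vec m * vec m)) := row3 t.2.2 t.2.1 t.1.
have fbij : bijective f.
  exists (fun x => (rsubmx x, (rsubmx (lsubmx x), lsubmx (lsubmx x)))) => [[y3 [y2 y1]]|x].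
    by rewrite /f /row3 !row_mxKl !row_mxKr.
  by rewrite /f /= row3K.
rewrite -(on_card_preimset (onW_bij _ fbij)) -sum1_card big_mkcond /=.
rewrite (eq_bigr (fun t => if f (t.1, t.2) \in N4 A B C then 1 else 0)%N);
  last by case=> y3 p _; rewrite inE.
rewrite -(pair_bigA _ (fun y3 p => if f (y3, p) \in N4 A B C then 1 else 0)%N) /=.
apply: eq_bigr => y3 _.
rewrite (eq_bigr (fun p => if f (y3, (p.1, p.2)) \in N4 A B C then 1 else 0)%N) => [|[] //].
rewrite -(pair_bigA _ (fun y2 y1 => if f (y3, (y2, y1)) \in N4 A B C then 1 else 0)%N) /=.
by apply: eq_bigr => y2 _; rewrite -sum1dep_card [RHS]big_mkcond.
Qed.

Lemma card_N4_fibre (m : nat) (A B C : {set 'I_m}) (y2 y3 : vec m) :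
  A :&: B = set0 ->
  #|[set y1 : vec m | row3 y1 y2 y3 \in N4 A B C]| =
  (if inDelta A y3 && (y3 != 0%R) && ~~ inDelta C y2 then 2 * 2 ^ #|B| else 0)%N.
Proof.
move=> AB; under eq_finset do rewrite N4P.
case: ifP => [/andP[/andP[Ay3 y3n0] Cy2]|not_y3y2].
  rewrite -(card_Delta_coset2 (y := y3)); last first.
    by apply: contra y3n0 => By3; rewrite (inDelta_disjoint AB Ay3 By3).
  by apply: eq_card => y1; rewrite !inE Ay3 y3n0 Cy2.
apply/eqP; rewrite cards_eq0; apply/eqP/setP => y1; rewrite !inE.
by apply/negbTE; apply: contraFN not_y3y2 => /and4P[-> -> -> _].
Qed.

Lemma card_N4 (m : nat) (A B C : {set 'I_m}) :
  A :&: B = set0 ->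
  #|N4 A B C| = ((2 ^ #|A| - 1) * ((2 ^ m - 2 ^ #|C|) * (2 * 2 ^ #|B|)))%N.
Proof.
move=> AB; rewrite card_N4_sum -card_Delta_neq0 -card_notDelta -!sum_nat_const.
rewrite [RHS]big_mkcond; apply: eq_bigr => y3 _; rewrite inE.
rewrite (eq_bigr _ (fun y2 _ => card_N4_fibre C y2 y3 AB)).
case: (inDelta A y3 && _) => /=; last by rewrite big1_eq.
by rewrite [RHS]big_mkcond; apply: eq_bigr => y2 _; rewrite inE.
Qed.

Section N4Code.
Variables (m : nat) (A B C : {set 'I_m}) (j0 : 'I_m).
Hypothesis compC : ~: C = [set j0].

Let S := (genN4 A B C)^T.

Lemma row_genN4 i : row i S = enum_val i.
Proof. by apply/rowP => j; rewrite !mxE. Qed.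

Lemma N4_sub x : x \in N4 A B C -> (x <= S)%MS.
Proof. by move=> xN; rewrite -(enum_rankK_in xN xN) -row_genN4 row_sub. Qed.

Lemma N4_addmx_sub x y : x \in N4 A B C -> y \in N4 A B C -> ((x + y)%R <= S)%MS.
Proof. by move=> xN yN; rewrite addmx_sub ?N4_sub. Qed.

Lemma notDelta_delta_j0 : ~~ inDelta C ('e_j0 : vec m).
Proof. by rewrite (notDelta_compl1 _ compC) mxE !eqxx. Qed.

Lemma genN4_sub_diag3 : (S <= diag3_mx (sel_mx (A :|: B)) 1%:M (sel_mx A))%MS.
Proof.
apply/row_subP => i; rewrite row_genN4.
have := enum_valP i; rewrite -[enum_val i]row3K N4P.
set y1 := lsubmx (lsubmx _); set y3 := rsubmx (enum_val i) => /and4P[Ay3 _ _ By].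
apply: row3_sub_diag3_mx; rewrite ?sel_mx_sub ?submx1 //.
have AB_A : A \subset A :|: B := subsetUl A B; have AB_B : B \subset A :|: B := subsetUr A B.
case/orP: By => [/(inDeltaS AB_B) //|/(inDeltaS AB_B) By13].
by rewrite -(addmxKF2 y1 y3) inDeltaD // (inDeltaS AB_A).
Qed.

Lemma dual_genN4_wt_ge4 (c : vec #|N4 A B C|) :
  (c <= dual_code (genN4 A B C))%MS -> c != 0 -> (4 <= wt c)%N.
Proof.
apply: (@kermx_wt_ge4 _ _ _ (lshift m (rshift m j0))) => [i j|j].
  by rewrite !row_genN4 => /enum_val_inj.
rewrite !mxE; have := enum_valP j; rewrite -[enum_val j]row3K N4P => /and4P[_ _ + _].
by rewrite (notDelta_compl1 _ compC) /row3 row_mxEl row_mxEr => /eqP.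
Qed.

Variables (a a' b : 'I_m).
Hypotheses (aA : a \in A) (a'A : a' \in A) (a'a : a' != a) (bB : b \in B) (ab : a != b).

Let P w := row3 0 'e_j0 w.

Let P_N4 w : inDelta A w -> w != 0 -> P w \in N4 A B C.
Proof. by move=> Aw w0; rewrite N4P Aw w0 notDelta_delta_j0 inDelta0. Qed.

(* The only place where |A| >= 2 is used. *)
Lemma mid_j0_sub : (row3 0 'e_j0 0 <= S)%MS.
Proof.
have -> : row3 0 'e_j0 0 = P 'e_a + P 'e_a' + P ('e_a + 'e_a').
  by rewrite /P !add_row3 !addmx_xx !add0r.
rewrite addmx_sub ?N4_addmx_sub ?N4_sub ?P_N4 ?inDeltaD ?inDelta_delta ?delta_neq0 //.
apply: contraNneq a'a => /rowP/(_ a).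
by rewrite !mxE !eqxx [a == a']eq_sym (negbTE a'a) addr0 => /eqP; rewrite oner_eq0.
Qed.

Lemma right_delta_sub t : t \in A -> (row3 0 0 'e_t <= S)%MS.
Proof.
move=> tA; have -> : row3 0 0 'e_t = P 'e_t + row3 0 'e_j0 0.
  by rewrite /P add_row3 !addr0 addmx_xx.
by rewrite addmx_sub ?mid_j0_sub ?N4_sub ?P_N4 ?inDelta_delta ?delta_neq0.
Qed.

Lemma mid_delta_sub t : (row3 0 'e_t 0 <= S)%MS.
Proof.
have [->|tj0] := eqVneq t j0; first exact: mid_j0_sub.
have -> : row3 0 'e_t 0 = row3 0 ('e_t + 'e_j0) 'e_a + P 'e_a.
  by rewrite /P add_row3 addr0 addmxKF2 addmx_xx.
rewrite N4_addmx_sub ?P_N4 ?inDelta_delta ?delta_neq0 //.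
rewrite N4P inDelta_delta ?delta_neq0 ?inDelta0 //=.
by rewrite (notDelta_compl1 _ compC) !mxE !eqxx [j0 == t]eq_sym (negbTE tj0) add0r.
Qed.

Lemma left_delta_sub t : t \in A :|: B -> (row3 'e_t 0 0 <= S)%MS.
Proof.
case/setUP => [tA|tB].
  have -> : row3 'e_t 0 0 = row3 'e_t 'e_j0 'e_t + P 'e_t.
    by rewrite /P add_row3 !addr0 !addmx_xx.
  rewrite N4_addmx_sub ?P_N4 ?inDelta_delta ?delta_neq0 // N4P inDelta_delta ?delta_neq0 //=.
  by rewrite notDelta_delta_j0 addmx_xx inDelta0 orbT.
have -> : row3 'e_t 0 0 = row3 'e_t 'e_j0 'e_a + P 'e_a.
  by rewrite /P add_row3 addr0 !addmx_xx.
rewrite N4_addmx_sub ?P_N4 ?inDelta_delta ?delta_neq0 // N4P inDelta_delta ?delta_neq0 //=.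
by rewrite notDelta_delta_j0 inDelta_delta.
Qed.

Lemma genN4_eqmx : (S == diag3_mx (sel_mx (A :|: B)) 1%:M (sel_mx A))%MS.
Proof.
rewrite genN4_sub_diag3; apply: diag3_mx_sub => k.
- by rewrite row_sel_mx left_delta_sub ?enum_valP.
- by rewrite row1 mid_delta_sub.
- by rewrite row_sel_mx right_delta_sub ?enum_valP.
Qed.

Lemma rank_genN4 : \rank (genN4 A B C) = (#|A :|: B| + m + #|A|)%N.
Proof.
rewrite -mxrank_tr (eqmxP genN4_eqmx).
by apply/eqP/diag3_mx_free; rewrite ?sel_mx_free ?row_free_unit ?unitmx1.
Qed.

Let xs := [seq row3 y 'e_j0 'e_a | y <- [:: 0; 'e_a; 'e_b; 'e_a + 'e_b]].

Let xs_N4 : all (mem (N4 A B C)) xs.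
Proof.
rewrite /= !N4P !(inDelta_delta aA) delta_neq0 notDelta_delta_j0 /= inDelta0 addmx_xx inDelta0.
by rewrite orbT addrAC addmx_xx !add0r (inDelta_delta bB) !orbT.
Qed.

Let xs_uniq : uniq xs.
Proof.
rewrite map_inj_uniq => [|y z /row3_inj[]//].
apply: (@map_uniq _ _ (fun y : vec m => (y 0 a, y 0 b))).
by rewrite /= !mxE /= [b == a]eq_sym (negbTE ab) !eqxx.
Qed.

Let xs_sum : \sum_(x <- xs) x = 0.
Proof.
rewrite big_map !big_cons big_nil addr0 !add_row3 !addrA add0r [_ + 'e_b + _]addrAC.
by rewrite !addmx_xx !add0r !addmx_xx /row3 !row_mx0.
Qed.

Lemma dual_genN4_wt4 :
  exists2 c : vec #|N4 A B C|, (c <= dual_code (genN4 A B C))%MS & (c != 0) && (wt c == 4%N).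
Proof.
have xsN : {subset xs <= N4 A B C} := allP xs_N4.
have x1N : row3 0 'e_j0 'e_a \in N4 A B C by apply: xsN; rewrite inE eqxx.
have rK : {in N4 A B C, cancel (enum_rank_in x1N) enum_val} := enum_rankK_in x1N.
apply: (@kermx_sum_delta _ _ _ (map (enum_rank_in x1N) xs)) => //.
  by rewrite map_inj_in_uniq ?xs_uniq //; apply: sub_in2 (can_in_inj rK).
rewrite big_map -[RHS]xs_sum; apply: eq_big_seq => x /xsN xN.
by rewrite row_genN4 rK.
Qed.

End N4Code.

Lemma four_le_pow2 (n : nat) : (2 <= n)%N -> (4 <= 2 ^ n)%N.
Proof. exact: (@leq_pexp2l 2 2). Qed.

Lemma setC1_of_card_pred (n : nat) (C : {set 'I_n}) :
  (0 < n)%N -> #|C| = (n - 1)%N -> exists j0, ~: C = [set j0].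
Proof. by move=> n0 cC; apply/cards1P; have := cardsC C; rewrite card_ord cC; lia. Qed.

Lemma expn2_pred (m : nat) : (0 < m)%N -> (2 ^ m = 2 * 2 ^ (m - 1))%N.
Proof. by case: m => // m _; rewrite expnS subn1. Qed.

Lemma card_N4_pow (m : nat) (A B C : {set 'I_m}) :
  (0 < m)%N -> A :&: B = set0 -> #|C| = (m - 1)%N ->
  #|N4 A B C| = ((2 ^ #|A| - 1) * 2 ^ (m - 1 + #|B|) * 2)%N.
Proof.
move=> m0 AB cardC; rewrite card_N4 // cardC (expn2_pred m0).
rewrite (_ : 2 * _ - _ = 2 ^ (m - 1))%N; last lia.
by rewrite expnD -mulnA; congr (_ * _)%N; ring.
Qed.

Lemma expn_diff_factor (m a b : nat) : (0 < m)%N ->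
  (2 ^ (m + a + b) - 2 ^ (m + b) = (2 ^ a - 1) * 2 ^ (m - 1 + b) * 2)%N.
Proof.
move=> m0; rewrite !expnD (expn2_pred m0) -!mulnA mulnBl mul1n.
by congr (_ - _)%N; ring.
Qed.

Lemma expn_corank (m a b : nat) : (0 < m)%N ->
  (2 ^ (m + 2 * a + b) = 2 * 2 ^ (m - 1 + b) * (2 ^ a * 2 ^ a))%N.
Proof. by move=> m0; rewrite mul2n -addnn !expnD (expn2_pred m0); ring. Qed.

Local Close Scope ring_scope.
Unset Implicit Arguments.
Set Strict Implicit.

Theorem mainTheorem16 (m : nat) (A B C : {set 'I_m}) :
  (2 <= m)%N -> A != set0 -> B != set0 -> C != set0 ->
  A :&: B = set0 -> #|C| = (m - 1)%N -> (2 <= #|A|)%N ->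
  #|N4 A B C| = (2 ^ (m + #|A| + #|B|) - 2 ^ (m + #|B|))%N /\
  distance_optimal (dual_code (genN4 A B C))
    (2 ^ (m + #|A| + #|B|) - 2 ^ (m + #|B|) - m - 2 * #|A| - #|B|)%N 4.
Proof.
move=> m2 _ /set0Pn[b bB] _ AB cardC A2; have m0 := ltnW m2.
have [a' [a [a'A aA a'a]]] := card_gt1P A2.
have [j0 compC] := setC1_of_card_pred m0 cardC.
have ab : a != b.
  by apply: contraTneq bB => <-; apply/negP => aB; move/setP: AB => /(_ a); rewrite !inE aA aB.
have cardN := card_N4_pow m0 AB cardC.
have cardN' : #|N4 A B C| = 2 ^ (m + #|A| + #|B|) - 2 ^ (m + #|B|).
  by rewrite cardN expn_diff_factor.
have rankG : \rank (genN4 A B C) = #|A| + #|B| + m + #|A|.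
  by rewrite (rank_genN4 B compC aA a'A a'a) cardsU AB cards0 subn0.
split=> //; split; [split; [|split] | move=> [r [M [rankM [_ M5]]]]].
- by rewrite /dual_code mxrank_ker mxrank_tr rankG cardN'; lia.
- exact (dual_genN4_wt4 compC aA bB ab).
- exact (@dual_genN4_wt_ge4 _ _ _ _ _ compC).
apply: (no_wt5_code cardN _ (expn_corank #|A| #|B| m0)) M5.
- by rewrite rankM -cardN'; lia.
- exact: four_le_pow2.
- apply: four_le_pow2; suff : 0 < #|B| by lia.
  by rewrite card_gt0; apply/set0Pn; exists b.
Qed.
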